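(* Let $k>4$ and $v\ge2$ be integers. If an OA$(3,k+1,v)$ exists, then a simple COA$_\lambda(2,2k+1,v)$ exists for every positive integer $\lambda\le v$.
   Context: An OA$_\lambda(t,k,v)$ is a $\lambda v^t\times k$ array over a $v$-set $V$ such that every $t$ columns contain every $t$-tuple exactly $\lambda$ times; OA$(t,k,v)$ means $\lambda=1$. A COA$_\lambda(t,k,v)$ is a $\lambda v^t\times k$ array over $V$ in which every set of $t$ consecutive columns contains every $t$-tuple exactly $\lambda$ times. It is simple if for any two distinct sets of $t$ consecutive columns sharing exactly $i$ columns ($0\le i\le t-1$), the subarray on the $2t-i$ columns of their union contains each $(2t-i)$-tuple at most once. *)

From mathcomp Require Import all_boot.
Set Implicit Arguments. Unset Strict Implicit. Unset Printing Implicit Defensive.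

(* An N x k array over the v-set 'I_v: A r c is the entry in row r, column c. *)
Definition array (N k v : nat) := 'I_N -> 'I_k -> 'I_v.

(* OA_lam(t,k,v): a (lam * v^t) x k array in which every t (distinct) columns,
   taken in any order c 0, ..., c (t-1), contain every t-tuple exactly lam times. *)
Definition is_OA (lam t k v : nat) (A : array (lam * v ^ t) k v) : Prop :=
  forall c : 'I_t -> 'I_k, injective c ->
  forall x : 'I_t -> 'I_v,
    #|[pred r : 'I_(lam * v ^ t) | [forall j : 'I_t, A r (c j) == x j]]| = lam.

(* COA_lam(t,k,v): every set of t consecutive columns a, a+1, ..., a+t-1
   (given as c : 'I_t -> 'I_k with c j = a + j, which forces a + t <= k)
   contains every t-tuple exactly lam times. *)
Definition is_COA (lam t k v : nat) (A : array (lam * v ^ t) k v) : Prop :=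
  forall c : 'I_t -> 'I_k, (exists a : nat, forall j : 'I_t, val (c j) = a + j) ->
  forall x : 'I_t -> 'I_v,
    #|[pred r : 'I_(lam * v ^ t) | [forall j : 'I_t, A r (c j) == x j]]| = lam.

Definition in_block (t a : nat) (c : nat) : bool := (a <= c) && (c < a + t).

(* Simplicity: for two distinct blocks of t consecutive columns (starting at
   a < b), the subarray on the union of their columns contains every tuple
   at most once, i.e. two distinct rows differ on some column of the union. *)
Definition is_simple_COA (lam t k v : nat) (A : array (lam * v ^ t) k v) : Prop :=
  is_COA A /\
  forall a b : nat, a < b -> a + t <= k -> b + t <= k ->
  forall r r' : 'I_(lam * v ^ t), r != r' ->
    exists c : 'I_k, (in_block t a c || in_block t b c) && (A r c != A r' c).

From mathcomp Require Import all_boot zify.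
Set Implicit Arguments. Unset Strict Implicit. Unset Printing Implicit Defensive.

(* Let A be an OA(3, k+1, v).  Since A has strength 3 and index 1, the
   map sending a row to its entries on three fixed distinct columns is a
   bijection onto 'I_v^3; hence two distinct rows agree on at most two columns
   ("A separates triples of columns"), and any count of rows is a count of
   triples.
   Step 1 (derived array): keep the lam * v^2 rows whose entry in column 0 is
   < lam and delete column 0.  Counting triples shows this is an OA_lam(2,k,v),
   and it still separates triples of columns.
   Step 2 (column map): if D is an OA_lam(2,k,v) separating triples of columns
   and f maps 0..n-1 to columns so that consecutive columns go to distinct
   columns and the union of two distinct consecutive pairs hits three distinct
   columns, then (i, c) |-> D i (f c) is a simple COA_lam(2,n,v).
   Step 3: the "weave" c |-> c/2 + 2 (c mod 2) (mod k), i.e. 0, 2, 1, 3, 2,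
   4, ..., has these properties on 0..2k when k > 4. *)

Definition separates3 (N k v : nat) (D : array N k v) : Prop :=
  forall c1 c2 c3 : 'I_k, c1 != c2 -> c1 != c3 -> c2 != c3 ->
  forall r r' : 'I_N,
    D r c1 = D r' c1 -> D r c2 = D r' c2 -> D r c3 = D r' c3 -> r = r'.

Definition tuple3 (T : Type) (a b c : T) (j : 'I_3) : T := nth a [:: a; b; c] j.

Lemma tuple3_inj (T : eqType) (a b c : T) :
  a != b -> a != c -> b != c -> injective (tuple3 a b c).
Proof.
move=> ab ac bc [[|[|[|i]]] hi] [[|[|[|j]]] hj] //= E; apply: val_inj => //=;
  by move: ab ac bc; rewrite /tuple3 /= in E; rewrite E eqxx.
Qed.

Lemma forall_ord3 (P : pred 'I_3) :
  [forall j, P j] = [&& P ord0, P (@Ordinal 3 1 isT) & P (@Ordinal 3 2 isT)].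
Proof.
apply/forallP/and3P => [H|[P0 P1 P2] [[|[|[|j]]] hj] //]; first by split; apply: H.
- by rewrite (_ : Ordinal hj = ord0) //; apply: val_inj.
- by rewrite (_ : Ordinal hj = Ordinal (isT : 1 < 3)) //; apply: val_inj.
- by rewrite (_ : Ordinal hj = Ordinal (isT : 2 < 3)) //; apply: val_inj.
Qed.

Lemma forall_ord2 (P : pred 'I_2) :
  [forall j, P j] = P ord0 && P (@Ordinal 2 1 isT).
Proof.
apply/forallP/andP => [H|[P0 P1] [[|[|j]] hj] //]; first by split; apply: H.
- by rewrite (_ : Ordinal hj = ord0) //; apply: val_inj.
- by rewrite (_ : Ordinal hj = Ordinal (isT : 1 < 2)) //; apply: val_inj.
Qed.

Lemma ord2_inj (T : eqType) (g : 'I_2 -> T) :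
  g ord0 != g (Ordinal (isT : 1 < 2)) -> injective g.
Proof.
have ord2_cases (i : 'I_2) : i = ord0 \/ i = Ordinal (isT : 1 < 2).
  by case: i => [[|[|m]] hm] //; [left|right]; apply: val_inj.
move=> g01 i j; have [->|->] := ord2_cases i; have [->|->] := ord2_cases j => // E;
  by rewrite E eqxx in g01.
Qed.

Section OrthogonalArrayOfStrengthThree.
Variables (k v : nat) (A : array (1 * v ^ 3) k v).
Hypothesis A_OA : is_OA A.
Variables (c1 c2 c3 : 'I_k).
Hypotheses (c12 : c1 != c2) (c13 : c1 != c3) (c23 : c2 != c3).

Definition triple (r : 'I_(1 * v ^ 3)) : 'I_v * 'I_v * 'I_v := (A r c1, A r c2, A r c3).

Lemma triple_fiber (t : 'I_v * 'I_v * 'I_v) : #|[pred r | triple r == t]| = 1.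
Proof.
case: t => [[x1 x2] x3].
apply: etrans (A_OA (tuple3_inj c12 c13 c23) (tuple3 x1 x2 x3)).
by apply: eq_card => r; rewrite !inE forall_ord3 /tuple3 /= !xpair_eqE andbA.
Qed.

(* Injective by the previous lemma, and there are v^3 rows and v^3 triples. *)
Lemma triple_bij : bijective triple.
Proof.
apply: inj_card_bij; last first.
  by rewrite card_ord !card_prod card_ord mul1n !expnS expn0 muln1 mulnA.
move=> r r' E; have /eqP := triple_fiber (triple r); rewrite eqn_leq.
by case/andP=> /card_le1_eqP fib _; apply: fib; rewrite !inE ?E.
Qed.

Lemma card_triple_preimset (Q : {set 'I_v * 'I_v * 'I_v}) : #|triple @^-1: Q| = #|Q|.
Proof. exact: on_card_preimset (onW_bij _ triple_bij). Qed.

End OrthogonalArrayOfStrengthThree.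

Lemma oa3_separates3 (k v : nat) (A : array (1 * v ^ 3) k v) :
  is_OA A -> separates3 A.
Proof.
move=> A_OA c1 c2 c3 c12 c13 c23 r r' e1 e2 e3.
by apply: (bij_inj (triple_bij A_OA c12 c13 c23)); rewrite /triple e1 e2 e3.
Qed.

Section SetEnumeration.
Variables (T : finType) (S : {set T}) (N : nat).
Hypothesis card_S : #|S| = N.

Definition setenum (i : 'I_N) : T := enum_val (cast_ord (esym card_S) i).

Lemma setenum_inj : injective setenum.
Proof. by move=> i i' /enum_val_inj /cast_ord_inj. Qed.

Lemma card_setenum_pred (P : pred T) :
  #|[pred i | P (setenum i)]| = #|[pred x in S | P x]|.
Proof.
rewrite -(card_image setenum_inj); apply: eq_card => x; rewrite inE.
apply/imageP/andP => [[i Pi ->]|[xS Px]]; first by rewrite enum_valP.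
exists (cast_ord card_S (enum_rank_in xS x)).
  by rewrite inE /setenum cast_ordK (enum_rankK_in xS xS).
by rewrite /setenum cast_ordK (enum_rankK_in xS xS).
Qed.

End SetEnumeration.

Lemma card_ord_lt (v lam : nat) : lam <= v -> #|[set s : 'I_v | s < lam]| = lam.
Proof.
move=> lam_le_v; have widen_inj : injective (widen_ord lam_le_v).
  by move=> s s' /(congr1 val) E; apply: val_inj.
rewrite -[RHS](card_ord lam) -cardsT -(card_imset _ widen_inj).
congr #|pred_of_set _|; apply/setP => s; rewrite inE.
apply/idP/imsetP => [s_lt|[s' _ ->]]; last exact: (ltn_ord s').
by exists (Ordinal s_lt); rewrite ?inE //; apply: val_inj.
Qed.

Section DerivedArray.
Variables (k v lam : nat) (A : array (1 * v ^ 3) k.+1 v).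
Hypotheses (A_OA : is_OA A) (lam_le_v : lam <= v) (k_gt1 : 1 < k).

Definition low_rows : {set 'I_(1 * v ^ 3)} := [set r | A r ord0 < lam].

(* Counting triples on columns 0, 1, 2: there are lam * v^2 such rows. *)
Lemma card_low_rows : #|low_rows| = lam * v ^ 2.
Proof.
pose col1 : 'I_k.+1 := inord 1; pose col2 : 'I_k.+1 := inord 2.
have [c01 c02 c12] : [/\ ord0 != col1, ord0 != col2 & col1 != col2].
  by rewrite -!val_eqE /= !inordK //; lia.
have -> : lam * v ^ 2 = #|setX (setX [set s : 'I_v | s < lam] [set: 'I_v]) [set: 'I_v]|.
  by rewrite !cardsX (card_ord_lt lam_le_v) cardsT card_ord -mulnA mulnn.
rewrite -(card_triple_preimset A_OA c01 c02 c12).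
by apply: eq_card => r; rewrite !inE !andbT.
Qed.

Definition derived_array : array (lam * v ^ 2) k v :=
  fun i c => A (setenum card_low_rows i) (lift ord0 c).

(* Two columns c0, c1 of the derived array carry (x0, x1) in as many rows as
   there are triples (s, x0, x1) with s < lam, on columns 0, c0+1, c1+1. *)
Lemma derived_array_OA : is_OA derived_array.
Proof.
move=> c c_inj x; pose j1 : 'I_2 := Ordinal (isT : 1 < 2).
set c0 := c ord0; set c1 := c j1.
have [h01 h02 h12] : [/\ ord0 != lift ord0 c0, ord0 != lift ord0 c1
                      & lift ord0 c0 != lift ord0 c1].
  by rewrite !neq_lift (inj_eq (@lift_inj _ ord0)) (inj_eq c_inj).
rewrite (card_setenum_pred _ (fun r => [forall j, A r (lift ord0 (c j)) == x j])).
have -> : lam = #|setX (setX [set s : 'I_v | s < lam] [set x ord0]) [set x j1]|.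
  by rewrite !cardsX (card_ord_lt lam_le_v) !cards1 !muln1.
rewrite -(card_triple_preimset A_OA h01 h02 h12).
by apply: eq_card => r; rewrite !inE forall_ord2 andbA.
Qed.

(* Distinct rows of the derived array are distinct rows of A, and distinct
   columns stay distinct after the shift, so triples are still separated. *)
Lemma derived_array_separates3 : separates3 derived_array.
Proof.
have lift_neq (a b : 'I_k) : a != b -> lift ord0 a != lift ord0 b.
  by rewrite (inj_eq (@lift_inj _ ord0)).
rewrite /derived_array => c1 c2 c3 c12 c13 c23 i i' e1 e2 e3.
apply: (@setenum_inj _ _ _ card_low_rows).
exact: (oa3_separates3 A_OA (lift_neq _ _ c12) (lift_neq _ _ c13) (lift_neq _ _ c23)
                          e1 e2 e3).
Qed.

End DerivedArray.

Section ColumnMap.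
Variables (lam v k n : nat) (D : array (lam * v ^ 2) k v) (f : nat -> 'I_k).
Hypotheses (D_OA : is_OA D) (D_sep : separates3 D).
Hypothesis f_consec : forall a, a.+1 < n -> f a != f a.+1.
Hypothesis f_three : forall a b, a < b -> b.+1 < n ->
  (f b != f a) && (f b != f a.+1) || (f b.+1 != f a) && (f b.+1 != f a.+1).

Definition column_array : array (lam * v ^ 2) n v := fun i c => D i (f c).

(* Two consecutive columns are two distinct columns of D: each pair of values
   appears lam times. *)
Lemma column_array_COA : is_COA column_array.
Proof.
move=> c [a c_val] x; pose j1 : 'I_2 := Ordinal (isT : 1 < 2).
have [c0_val c1_val] : c ord0 = a :> nat /\ c j1 = a.+1 :> nat.
  by rewrite !c_val addn0 addn1.
apply: (D_OA (c := fun j => f (c j))); apply: ord2_inj.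
by rewrite c0_val c1_val f_consec // -c1_val.
Qed.

(* Two distinct rows agreeing on both blocks would agree on three distinct
   columns of D, hence be equal. *)
Lemma column_array_simple : is_simple_COA column_array.
Proof.
split; first exact: column_array_COA.
move=> a b ab a_fits b_fits r r' rr'; apply/existsP; move: rr'.
apply: contraNT => /existsPn agree; apply/eqP.
have same p : p < n -> in_block 2 a p || in_block 2 b p -> D r (f p) = D r' (f p).
  move=> p_lt p_in; apply/eqP.
  by move: (agree (Ordinal p_lt)); rewrite /= p_in negbK.
have a_a1 : f a != f a.+1 by apply: f_consec; lia.
have b1_lt : b.+1 < n by lia.
case/orP: (f_three ab b1_lt) => /andP [nb_a nb_a1].
- apply: (D_sep a_a1 _ _ (same a _ _) (same a.+1 _ _) (same b _ _));
    by rewrite 1?eq_sym // /in_block; lia.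
- apply: (D_sep a_a1 _ _ (same a _ _) (same a.+1 _ _) (same b.+1 _ _));
    by rewrite 1?eq_sym // /in_block; lia.
Qed.
End ColumnMap.

Section Weave.
Variables (k : nat) (k_gt0 : 0 < k).

Definition weave (c : nat) : 'I_k :=
  Ordinal (ltn_pmod (c %/ 2 + 2 * (c %% 2)) k_gt0).

Lemma weave_val (c : nat) : 1 < k -> c <= 2 * k ->
  (c %/ 2 + 2 * (c %% 2) < k /\ (weave c : nat) = c %/ 2 + 2 * (c %% 2)) \/
  (k <= c %/ 2 + 2 * (c %% 2) /\ (weave c : nat) = c %/ 2 + 2 * (c %% 2) - k).
Proof.
move=> k_gt1 c_le; set m := c %/ 2 + 2 * (c %% 2).
case: (ltnP m k) => [m_lt|m_ge]; [left|right]; split=> //=.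
  by rewrite modn_small.
have m_lt : m - k < k by rewrite /m in m_ge *; lia.
by rewrite -/m -{1}(subnK m_ge) modnDr modn_small.
Qed.

Lemma weave_consec (c : nat) : 2 < k -> c < 2 * k -> weave c != weave c.+1.
Proof.
move=> k_gt2 c_lt; rewrite -(inj_eq (@ord_inj k)).
have k_gt1 : 1 < k by lia.
have := weave_val k_gt1 (ltnW c_lt); have := weave_val k_gt1 c_lt; lia.
Qed.

Lemma weave_three (a b : nat) : 4 < k -> a < b -> b < 2 * k ->
  (weave b != weave a) && (weave b != weave a.+1) ||
  (weave b.+1 != weave a) && (weave b.+1 != weave a.+1).
Proof.
move=> k_gt4 ab b_lt; rewrite -!(inj_eq (@ord_inj k)).
have k_gt1 : 1 < k by lia.
have := weave_val k_gt1 (ltnW (ltn_trans ab b_lt)).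
have := weave_val k_gt1 (ltnW (leq_ltn_trans ab b_lt)).
have := weave_val k_gt1 (ltnW b_lt); have := weave_val k_gt1 b_lt; lia.
Qed.

End Weave.

Theorem mainTheorem7 (k v : nat) :
  4 < k -> 2 <= v ->
  (exists A : array (1 * v ^ 3) k.+1 v, is_OA A) ->
  forall lam : nat, 0 < lam -> lam <= v ->
  exists B : array (lam * v ^ 2) (2 * k).+1 v, is_simple_COA B.
Proof.
move=> k_gt4 _ [A A_OA] lam _ lam_le_v.
have k_gt1 : 1 < k by lia.
have k_gt0 : 0 < k by lia.
exists (column_array (derived_array A_OA lam_le_v k_gt1) (weave k_gt0)).
apply: column_array_simple.
- exact: derived_array_OA.
- exact: derived_array_separates3.
- by move=> a a_lt; apply: weave_consec; lia.
- by move=> a b ab b_lt; apply: weave_three; lia.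
Qed.
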